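(* Suppose that for every $c\in\{1,\dots,K-1\}$, $$\bar p_c(\bm x,\bar Y)=\binom{K-1}{c}^{-1}\sum_{y\notin \bar Y}p(\bm x,y)\qquad(\bm x\in\mathcal X,\ \bar Y\in\overline{\mathcal Y}_c),$$ and let $\pi_1,\dots,\pi_{K-1}\ge0$ with $\sum_c\pi_c=1$. Let $\bar p$ be the density on $\mathcal X\times\overline{\mathcal Y}$, $\overline{\mathcal Y}=\bigcup_{c=1}^{K-1}\overline{\mathcal Y}_c$, given by $\bar p(\bm x,\bar Y)=\pi_c\,\bar p_c(\bm x,\bar Y)$ whenever $|\bar Y|=c$, and let $\bar p(\bm x)$ be its marginal on $\mathcal X$. Put $\lambda=(K-1)/\sum_{c=1}^{K-1}c\,\pi_c$ and let $\gamma\in[0,1]$. Then for any loss $\ell$ and decision function $\bm g$ (with finite expectations), $$R(\bm g)=\mathbb E_{\bar p(\bm x,\bar Y)}\Big[\mathcal L(\bm g(\bm x))-\lambda\sum_{y\in\bar Y}\ell(\bm g(\bm x),y)\Big]$$ and $$R(\bm g)=\mathbb E_{\bar p(\bm x,\bar Y)}\Big[(1-\gamma)\mathcal L(\bm g(\bm x))-\lambda\sum_{y\in\bar Y}\ell(\bm g(\bm x),y)\Big]+\gamma\,\mathbb E_{\bar p(\bm x)}\big[\mathcal L(\bm g(\bm x))\big].$$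
   Context: Let $K\ge 2$, $\mathcal X\subseteq\mathbb R^d$ the feature space and $\mathcal Y=\{1,\dots,K\}$ the label space. Let $p(\bm x,y)$ be a joint density on $\mathcal X\times\mathcal Y$ with marginal density $p(\bm x)$. For $c\in\{1,\dots,K-1\}$, $\overline{\mathcal Y}_c$ denotes the collection of all $c$-element subsets of $\{1,\dots,K\}$, and $\bar p_c(\bm x,\bar Y)$ is a density on $\mathcal X\times\overline{\mathcal Y}_c$. A decision function is a map $\bm g:\mathcal X\to\mathbb R^K$, a loss is a function $\ell:\mathbb R^K\times\mathcal Y\to[0,\infty)$, the classification risk is $R(\bm g)=\mathbb E_{p(\bm x,y)}[\ell(\bm g(\bm x),y)]$, and the cumulative loss is $\mathcal L(\bm g(\bm x))=\sum_{y=1}^K\ell(\bm g(\bm x),y)$. *)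

(* Scalars: an arbitrary real field R (the reals are an instance).
   Labels {1..K} are represented by 'I_K (0-indexed). *)
From HB Require Import structures.
From mathcomp Require Import all_boot all_order all_algebra.
Set Implicit Arguments. Unset Strict Implicit. Unset Printing Implicit Defensive.
Import Order.TTheory GRing.Theory Num.Theory.
Local Open Scope ring_scope.

(* Abstract integration over the feature space X: a class [Int] of integrable
   functions closed under sums and scalar multiples, and an integral [E]
   linear on that class (e.g. Lebesgue integral over X ⊆ R^d). *)
Definition linear_integral (R : realFieldType) (X : Type)
  (Int : (X -> R) -> Prop) (E : (X -> R) -> R) : Prop :=
  [/\ (forall f g, Int f -> Int g -> Int (fun x => f x + g x)),
      (forall (c : R) f, Int f -> Int (fun x => c * f x)),
      (forall f g, Int f -> Int g -> E (fun x => f x + g x) = E f + E g)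
    & (forall (c : R) f, Int f -> E (fun x => c * f x) = c * E f)].

Definition in_Ybar (K : nat) (Y : {set 'I_K}) : bool := (1 <= #|Y| <= K.-1)%N.

Definition cum_loss (R : realFieldType) (K : nat) (ell : 'rV[R]_K -> 'I_K -> R)
  (v : 'rV[R]_K) : R := \sum_(y < K) ell v y.

Definition risk_integrand (R : realFieldType) (X : Type) (K : nat)
  (p : X -> 'I_K -> R) (ell : 'rV[R]_K -> 'I_K -> R) (g : X -> 'rV[R]_K) : X -> R :=
  fun x => \sum_(y < K) p x y * ell (g x) y.

Definition risk (R : realFieldType) (X : Type) (K : nat) (E : (X -> R) -> R)
  (p : X -> 'I_K -> R) (ell : 'rV[R]_K -> 'I_K -> R) (g : X -> 'rV[R]_K) : R :=
  E (risk_integrand p ell g).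

Definition pbar (R : realFieldType) (X : Type) (K : nat) (pi : nat -> R)
  (pbc : nat -> X -> {set 'I_K} -> R) (x : X) (Y : {set 'I_K}) : R :=
  if in_Ybar Y then pi #|Y| * pbc #|Y| x Y else 0.

Definition pbar_marg (R : realFieldType) (X : Type) (K : nat)
  (pb : X -> {set 'I_K} -> R) (x : X) : R :=
  \sum_(Y : {set 'I_K} | in_Ybar Y) pb x Y.

Definition joint_integrand (R : realFieldType) (X : Type) (K : nat)
  (pb : X -> {set 'I_K} -> R) (F : X -> {set 'I_K} -> R) : X -> R :=
  fun x => \sum_(Y : {set 'I_K} | in_Ybar Y) pb x Y * F x Y.

Definition Ejoint (R : realFieldType) (X : Type) (K : nat) (E : (X -> R) -> R)
  (pb : X -> {set 'I_K} -> R) (F : X -> {set 'I_K} -> R) : R :=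
  E (joint_integrand pb F).

Definition lambda_of (R : realFieldType) (K : nat) (pi : nat -> R) : R :=
  (K.-1)%:R / \sum_(1 <= c < K) c%:R * pi c.

From HB Require Import structures.
From mathcomp Require Import all_boot all_order all_algebra.
Import Order.TTheory GRing.Theory Num.Theory.
Local Open Scope ring_scope.

From mathcomp Require Import zify ring.
From Stdlib Require Import FunctionalExtensionality.

(* For fixed x, a complementary label set of size c is uniform among the
   c-subsets avoiding the true label.  A label y is avoided by C(K-1,c) such
   sets, so the marginal of the mixture is p(x); a label y' <> y lies in
   C(K-2,c-1) = c/(K-1) * C(K-1,c) of them, so the mixture-average of
   sum_(y in Y) l(y) is (sum_c c pi_c)/(K-1) * (p(x) L - sum_y p(x,y) l(y)),
   with L the cumulative loss, i.e. exactly (p(x) L - risk integrand) / lambda.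
   Hence the integrand of E[a L - lambda sum_(y in Y) l] is pointwise the risk
   integrand minus (1-a) p(x) L, and linearity of E gives both identities. *)

Set Implicit Arguments.
Unset Strict Implicit.
Unset Printing Implicit Defensive.

Section SubsetCounting.
Variable T : finType.

Lemma card_sets_notin (y : T) c :
  #|[set Y : {set T} | (#|Y| == c) && (y \notin Y)]| = 'C(#|T|.-1, c).
Proof.
rewrite -(cardsC1 y) -cards_draws; apply: eq_card => Y; rewrite !inE andbC.
by rewrite subsets_disjoint setCK disjoint_sym disjoints1.
Qed.

Lemma card_sets_notin2 (y y' : T) c : y != y' ->
  #|[set Y : {set T} | [&& #|Y| == c, y \notin Y & y' \notin Y]]| = 'C(#|T|.-2, c).
Proof.
move=> neq_yy'; have /[!cards2] := cardsC [set y; y'].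
rewrite neq_yy' => card_compl.
rewrite -(_ : #|~: [set y; y']| = #|T|.-2) -?cards_draws; last by lia.
apply: eq_card => Y; rewrite !inE setCU subsetI !subsets_disjoint !setCK.
rewrite ![[disjoint Y & _]]disjoint_sym !disjoints1.
by case: (#|Y| == c); case: (y \in Y); case: (y' \in Y).
Qed.

Lemma card_sets_notin_mem (y y' : T) c : y != y' -> (0 < c)%N ->
  #|[set Y : {set T} | [&& #|Y| == c, y \notin Y & y' \in Y]]| = 'C(#|T|.-2, c.-1).
Proof.
move=> neq_yy' c_gt0.
have two_le_T : (2 <= #|T|)%N.
  by have := max_card [set y; y']; rewrite cards2 neq_yy'.
set A := [set Y : {set T} | (#|Y| == c) && (y \notin Y)].
set B := [set Y : {set T} | y' \in Y].
have -> : [set Y : {set T} | [&& #|Y| == c, y \notin Y & y' \in Y]] = A :&: B.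
  by apply/setP => Y; rewrite !inE andbA.
have card_AB : #|A :\: B| = 'C(#|T|.-2, c).
  rewrite -(card_sets_notin2 c neq_yy'); apply: eq_card => Y.
  by rewrite !inE andbC andbA.
have := cardsID B A; rewrite card_AB card_sets_notin.
have -> : #|T|.-1 = (#|T|.-2).+1 by lia.
by rewrite -(prednK c_gt0) binS (prednK c_gt0) /= addnC => /addnI.
Qed.

End SubsetCounting.

Section ComplementaryMassSums.
Variables (R : realFieldType) (T : finType).
Implicit Types (p ell : T -> R) (y : T).

Lemma sum_sets_notin_exchange p (F : {set T} -> R) c :
  \sum_(Y : {set T} | #|Y| == c) (\sum_(y | y \notin Y) p y) * F Y
  = \sum_y p y * \sum_(Y : {set T} | (#|Y| == c) && (y \notin Y)) F Y.
Proof.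
under eq_bigr do rewrite mulr_suml big_mkcond.
rewrite exchange_big; apply: eq_bigr => y _ /=.
rewrite mulr_sumr big_mkcondr; apply: eq_bigr => Y _.
by case: (y \notin Y).
Qed.

Lemma sum_sets_notin_const y c (a : R) :
  \sum_(Y : {set T} | (#|Y| == c) && (y \notin Y)) a = a *+ 'C(#|T|.-1, c).
Proof. by rewrite sumr_const -(card_sets_notin y) cardsE. Qed.

Lemma sum_sets_notin_sum_mem ell y c : (0 < c)%N ->
  \sum_(Y : {set T} | (#|Y| == c) && (y \notin Y)) \sum_(y' in Y) ell y'
  = 'C(#|T|.-2, c.-1)%:R * (\sum_y' ell y' - ell y).
Proof.
move=> c_gt0; under eq_bigr do rewrite big_mkcond.
rewrite exchange_big /= (bigD1 y) //= big1 ?add0r => [|Y /andP[_ /negbTE->]//].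
rewrite [X in _ * (X - _)](bigD1 y) //= addrAC subrr add0r mulr_sumr.
apply: eq_bigr => y' neq_y'y; rewrite -big_mkcondr sumr_const mulr_natl.
rewrite -(@card_sets_notin_mem _ y y') 1?eq_sym // cardsE.
by congr (_ *+ _); apply: eq_card => Y; rewrite unfold_in -andbA.
Qed.

Lemma sum_sets_mass_notin p c :
  \sum_(Y : {set T} | #|Y| == c) \sum_(y | y \notin Y) p y
  = 'C(#|T|.-1, c)%:R * \sum_y p y.
Proof.
under eq_bigr => Y _ do rewrite -[\sum_(y | y \notin Y) p y]mulr1.
rewrite sum_sets_notin_exchange mulr_sumr; apply: eq_bigr => y _.
by rewrite sum_sets_notin_const mulr_natl mulr_natr.
Qed.

Lemma sum_sets_mass_notin_sum_mem p ell c : (0 < c)%N ->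
  \sum_(Y : {set T} | #|Y| == c) (\sum_(y | y \notin Y) p y) * \sum_(y in Y) ell y
  = 'C(#|T|.-2, c.-1)%:R * ((\sum_y p y) * (\sum_y ell y) - \sum_y p y * ell y).
Proof.
move=> c_gt0; rewrite sum_sets_notin_exchange mulr_suml -sumrB mulr_sumr.
apply: eq_bigr => y _; rewrite sum_sets_notin_sum_mem //; ring.
Qed.

End ComplementaryMassSums.

Lemma natr_bin_pred_ratio (R : numFieldType) n c : (0 < c <= n)%N ->
  'C(n.-1, c.-1)%:R / 'C(n, c)%:R = c%:R / n%:R :> R.
Proof.
case/andP=> c_gt0 le_cn.
have n_neq0 : n%:R != 0 :> R by rewrite pnatr_eq0 -lt0n (leq_trans c_gt0).
have bin_neq0 : 'C(n, c)%:R != 0 :> R by rewrite pnatr_eq0 -lt0n bin_gt0.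
have := congr1 (GRing.natmul (1 : R)) (mul_bin_diag n c.-1).
rewrite !natrM prednK // => diag.
by apply/eqP; rewrite eqr_div // mulrC diag mulrC.
Qed.

Lemma sum_sets_by_card (V : nmodType) (T : finType) (G : {set T} -> V) (a b : nat) :
  \sum_(Y : {set T} | (a <= #|Y| < b)%N) G Y
  = \sum_(a <= c < b) \sum_(Y : {set T} | #|Y| == c) G Y.
Proof.
under [RHS]eq_bigr do rewrite big_mkcond.
rewrite exchange_big big_mkcond; apply: eq_bigr => Y _ /=.
have [Y_in | Y_out] := boolP (a <= #|Y| < b)%N.
  rewrite (bigD1_seq #|Y|) ?mem_index_iota ?iota_uniq //= eqxx big1 ?addr0 //.
  by move=> c; rewrite eq_sym => /negbTE->.
rewrite big1_seq // => c /andP[_]; rewrite mem_index_iota.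
by case: eqP => // <- /(negP Y_out).
Qed.

Section ComplementaryLabelMixture.
Variables (R : realFieldType) (X : Type) (K : nat).
Variables (p : X -> 'I_K -> R) (pbc : nat -> X -> {set 'I_K} -> R) (pi : nat -> R).
Hypothesis K_ge2 : (2 <= K)%N.
Hypothesis pbc_def : forall (c : nat) x (Y : {set 'I_K}), (1 <= c <= K.-1)%N ->
  #|Y| = c -> pbc c x Y = ('C(K.-1, c)%:R)^-1 * \sum_(y < K | y \notin Y) p x y.
Hypothesis pi_ge0 : forall c, 0 <= pi c.
Hypothesis pi_sum1 : \sum_(1 <= c < K) pi c = 1.

Let predK_neq0 : (K.-1)%:R != 0 :> R.
Proof. by rewrite pnatr_eq0; lia. Qed.

Let bin_neq0 c : (c < K)%N -> 'C(K.-1, c)%:R != 0 :> R.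
Proof. by move=> c_ltK; rewrite pnatr_eq0 -lt0n bin_gt0; lia. Qed.

Lemma sum_pbar_by_card x (F : {set 'I_K} -> R) :
  \sum_(Y : {set 'I_K} | in_Ybar Y) pbar pi pbc x Y * F Y
  = \sum_(1 <= c < K) pi c / 'C(K.-1, c)%:R *
      \sum_(Y : {set 'I_K} | #|Y| == c) (\sum_(y | y \notin Y) p x y) * F Y.
Proof.
rewrite (eq_bigl (fun Y : {set 'I_K} => 1 <= #|Y| < K)%N); last first.
  by move=> Y; rewrite /in_Ybar; lia.
rewrite sum_sets_by_card; apply: eq_big_nat => c c_range.
rewrite mulr_sumr; apply: eq_bigr => Y /eqP card_Y.
by rewrite /pbar /in_Ybar card_Y ifT ?pbc_def //; [ring | lia | lia].
Qed.

Lemma pbar_marg_mixture x : pbar_marg (pbar pi pbc) x = \sum_y p x y.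
Proof.
rewrite /pbar_marg; under eq_bigr do rewrite -[pbar _ _ _ _]mulr1.
rewrite sum_pbar_by_card -[RHS]mul1r -[X in _ = X * _]pi_sum1 mulr_suml.
apply: eq_big_nat => c /andP[_ c_ltK]; under eq_bigr do rewrite mulr1.
by rewrite sum_sets_mass_notin card_ord; field; apply: bin_neq0.
Qed.

Lemma sum_pbar_sum_mem x (w : 'I_K -> R) :
  \sum_(Y : {set 'I_K} | in_Ybar Y) pbar pi pbc x Y * \sum_(y in Y) w y
  = (\sum_(1 <= c < K) c%:R * pi c) / (K.-1)%:R *
      ((\sum_y p x y) * (\sum_y w y) - \sum_y p x y * w y).
Proof.
rewrite sum_pbar_by_card -[RHS]mulrA [RHS]mulr_suml.
apply: eq_big_nat => c /andP[c_gt0 c_ltK].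
rewrite sum_sets_mass_notin_sum_mem // card_ord.
have -> : 'C(K.-2, c.-1)%:R = c%:R / (K.-1)%:R * 'C(K.-1, c)%:R :> R.
  by rewrite -natr_bin_pred_ratio ?divfK ?bin_neq0 //; lia.
by field; rewrite predK_neq0 bin_neq0.
Qed.

Lemma lambda_of_mulr_mean :
  lambda_of K pi * ((\sum_(1 <= c < K) c%:R * pi c) / (K.-1)%:R) = 1.
Proof.
have mean_ge1 : 1 <= \sum_(1 <= c < K) c%:R * pi c.
  rewrite -[X in X <= _]pi_sum1; apply: ler_sum_nat => c /andP[c_ge1 _].
  by rewrite ler_peMl // ler1n.
have mean_neq0 : \sum_(1 <= c < K) c%:R * pi c != 0 by rewrite gt_eqF ?(lt_le_trans ltr01).
by rewrite /lambda_of; field; rewrite mean_neq0 predK_neq0.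
Qed.

Lemma joint_integrand_pbar (ell : 'rV[R]_K -> 'I_K -> R) (g : X -> 'rV[R]_K) a x :
  joint_integrand (pbar pi pbc) (fun x Y =>
      a * cum_loss ell (g x) - lambda_of K pi * \sum_(y in Y) ell (g x) y) x
  = risk_integrand p ell g x - (1 - a) * ((\sum_y p x y) * cum_loss ell (g x)).
Proof.
rewrite /joint_integrand /risk_integrand.
under eq_bigr do rewrite mulrBr [_ * (a * _)]mulrCA [_ * (lambda_of _ _ * _)]mulrCA.
rewrite sumrB -!mulr_sumr -mulr_suml sum_pbar_sum_mem.
rewrite [lambda_of _ _ * _]mulrA lambda_of_mulr_mean mul1r.
rewrite -[\sum_(Y | in_Ybar Y) _]/(pbar_marg (pbar pi pbc) x) pbar_marg_mixture.
rewrite /cum_loss; ring.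
Qed.

End ComplementaryLabelMixture.

Theorem theorem5 (R : realFieldType) (X : Type) (K : nat)
  (Int : (X -> R) -> Prop) (E : (X -> R) -> R)
  (p : X -> 'I_K -> R) (pbc : nat -> X -> {set 'I_K} -> R) (pi : nat -> R)
  (gamma : R) (ell : 'rV[R]_K -> 'I_K -> R) (g : X -> 'rV[R]_K) :
  (2 <= K)%N ->
  linear_integral Int E ->
  (forall x y, 0 <= p x y) ->
  Int (fun x => \sum_(y < K) p x y) -> E (fun x => \sum_(y < K) p x y) = 1 ->
  (forall (c : nat) x (Y : {set 'I_K}), (1 <= c <= K.-1)%N -> #|Y| = c ->
     pbc c x Y = ('C(K.-1, c)%:R)^-1 * \sum_(y < K | y \notin Y) p x y) ->
  (forall c, 0 <= pi c) -> \sum_(1 <= c < K) pi c = 1 ->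
  0 <= gamma <= 1 ->
  (forall v y, 0 <= ell v y) ->
  Int (risk_integrand p ell g) ->
  Int (joint_integrand (pbar pi pbc) (fun x Y =>
         cum_loss ell (g x) - lambda_of K pi * \sum_(y in Y) ell (g x) y)) ->
  Int (joint_integrand (pbar pi pbc) (fun x Y =>
         (1 - gamma) * cum_loss ell (g x) - lambda_of K pi * \sum_(y in Y) ell (g x) y)) ->
  Int (fun x => pbar_marg (pbar pi pbc) x * cum_loss ell (g x)) ->
  risk E p ell g
    = Ejoint E (pbar pi pbc) (fun x Y =>
         cum_loss ell (g x) - lambda_of K pi * \sum_(y in Y) ell (g x) y)
  /\
  risk E p ell g
    = Ejoint E (pbar pi pbc) (fun x Y =>
         (1 - gamma) * cum_loss ell (g x) - lambda_of K pi * \sum_(y in Y) ell (g x) y)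
      + gamma * E (fun x => pbar_marg (pbar pi pbc) x * cum_loss ell (g x)).
Proof.
move=> K_ge2 [_ Int_scale E_add E_scale] _ _ _ pbc_def pi_ge0 pi_sum1 _ _ _ _.
move=> Int_joint Int_marg.
have joint := joint_integrand_pbar K_ge2 pbc_def pi_ge0 pi_sum1 ell g.
have marg x : pbar_marg (pbar pi pbc) x * cum_loss ell (g x)
              = (\sum_y p x y) * cum_loss ell (g x).
  by rewrite (pbar_marg_mixture K_ge2 pbc_def pi_sum1).
split; rewrite /risk /Ejoint.
  congr (E _); apply: functional_extensionality => x.
  have := joint 1 x; rewrite subrr mul0r subr0 => <-.
  by apply: eq_bigr => Y _; rewrite mul1r.
rewrite -E_scale // -E_add //; last exact: Int_scale.
by congr (E _); apply: functional_extensionality => x; rewrite joint marg; ring.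
Qed.
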